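(* Let $a\in\mathbf F^{\uparrow}$ with $\mathrm{supp}(a)=(0,r)$, let $\alpha_0\in(0,r)\cap A$, $\alpha_k=(\alpha_0)a^k$ ($k\in\mathbb Z$), and $b\in\mathbf F^{\uparrow}$ with $\mathrm{supp}(b)=(\alpha_0,\alpha_1)$. Let $G$ be a subgroup of $\mathbf V(r,\mathbb R^*_+,\mathbb R)$ with $G\cap\mathbf F(r,\mathbb R^*_+,\mathbb R)=\mathbf F$. Then $C_G(a)=C_{\mathbf F}(a)$ and $C_G(\{a^{-k}ba^k\mid k\in\mathbb Z\})=C_{\mathbf F}(\{a^{-k}ba^k\mid k\in\mathbb Z\})$.
   Context: Maps act on the right. Fix real $r>0$, a subgroup $\Lambda\neq\{1\}$ of $\mathbb R^*_+$, and an additive subgroup $A\subseteq\mathbb R$ with $r\in A$ and $\lambda A\subseteq A$ for $\lambda\in\Lambda$ (definitions also used with $\Lambda=\mathbb R^*_+$, $A=\mathbb R$). $\mathbf V(r,\Lambda,A)$ is the group of bijections $x\colon[0,r)\to[0,r)$ that are piecewise affine with finitely many breakpoints and discontinuities, right-continuous everywhere, with all slopes in $\Lambda$ and all breakpoints, discontinuity points and their images in $A$; $\mathbf F(r,\Lambda,A)$ is the subgroup of elements continuous for the usual topology; $\mathbf F=\mathbf F(r,\Lambda,A)$. $\mathbf F^{\uparrow}=\{x\in\mathbf F\mid(\gamma)x\ge\gamma\ \forall\gamma\}$; $\mathrm{supp}(x)$ is the set of non-fixed points; $C_G(S)$ is the centralizer of $S$ in $G$. *)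

From Stdlib Require Import Reals ZArith ClassicalEpsilon.
Open Scope R_scope.

(* The interval [0,r) as a type; maps act on it.  Maps act on the right:
   (t)(x y) = ((t)x)y, i.e. the product x y is the function  fun t => y (x t). *)
Definition I (r : R) : Type := { t : R | 0 <= t < r }.

Definition rmul {r : R} (x y : I r -> I r) : I r -> I r := fun t => y (x t).

Definition is_bij {r : R} (x : I r -> I r) : Prop :=
  exists y : I r -> I r, (forall t, y (x t) = t) /\ (forall t, x (y t) = t).

Definition is_PA (r : R) (Lam A : R -> Prop) (x : I r -> I r) : Prop :=
  exists (n : nat) (p lam c : nat -> R),
    p 0%nat = 0 /\ p n = r /\
    (forall i, (i < n)%nat -> p i < p (S i)) /\
    (forall i, (i <= n)%nat -> A (p i)) /\
    (forall i, (i < n)%nat -> Lam (lam i)) /\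
    (forall i, (i < n)%nat -> A (lam i * p i + c i)) /\
    (forall i, (i < n)%nat -> forall t : I r,
        p i <= proj1_sig t < p (S i) -> proj1_sig (x t) = lam i * proj1_sig t + c i).

Definition inV (r : R) (Lam A : R -> Prop) (x : I r -> I r) : Prop :=
  is_bij x /\ is_PA r Lam A x.

Definition cont_I {r : R} (x : I r -> I r) : Prop :=
  forall t : I r, forall eps, 0 < eps -> exists delta, 0 < delta /\
    forall s : I r, Rabs (proj1_sig s - proj1_sig t) < delta ->
      Rabs (proj1_sig (x s) - proj1_sig (x t)) < eps.

Definition inF (r : R) (Lam A : R -> Prop) (x : I r -> I r) : Prop :=
  inV r Lam A x /\ cont_I x.

Definition Rpos : R -> Prop := fun l => 0 < l.
Definition Rall : R -> Prop := fun _ => True.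

Definition inFup (r : R) (Lam A : R -> Prop) (x : I r -> I r) : Prop :=
  inF r Lam A x /\ forall t : I r, proj1_sig t <= proj1_sig (x t).

Definition subgroupV (r : R) (G : (I r -> I r) -> Prop) : Prop :=
  (forall x, G x -> inV r Rpos Rall x) /\
  G (fun t => t) /\
  (forall x y, G x -> G y -> G (rmul x y)) /\
  (forall x, G x -> exists y, G y /\ rmul x y = (fun t => t) /\ rmul y x = (fun t => t)).

Definition finv {T : Type} (f : T -> T) : T -> T :=
  fun y => epsilon (inhabits y) (fun x => f x = y).

Definition zpow {T : Type} (f : T -> T) (k : Z) : T -> T :=
  match k with
  | Z0 => fun t => t
  | Zpos q => fun t => Nat.iter (Pos.to_nat q) f t
  | Zneg q => fun t => Nat.iter (Pos.to_nat q) (finv f) t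
  end.

Definition commute {r : R} (x y : I r -> I r) : Prop := rmul x y = rmul y x.

Definition supp_eq {r : R} (x : I r -> I r) (lo hi : R) : Prop :=
  forall t : I r, x t <> t <-> (lo < proj1_sig t < hi).

Definition good_Lam (Lam : R -> Prop) : Prop :=
  (forall l, Lam l -> 0 < l) /\ Lam 1 /\
  (forall l m, Lam l -> Lam m -> Lam (l * m)) /\
  (forall l, Lam l -> Lam (/ l)) /\
  (exists l, Lam l /\ l <> 1).

Definition good_A (r : R) (Lam A : R -> Prop) : Prop :=
  A 0 /\ (forall a b, A a -> A b -> A (a + b)) /\ (forall a, A a -> A (- a)) /\
  A r /\ (forall l a, Lam l -> A a -> A (l * a)).

(* Centralizers in G of a one-bump element a of F with support (0,r), and of
   the conjugates a^-k b a^k of a one-bump b supported on (alpha0, alpha0 a),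
   consist of continuous maps; hence they lie in F, since G meets the
   continuous maps exactly in F.

   Elements of G are piecewise-affine bijections with positive slopes.  The
   key lemma [cont_on_bump_support] says that such a map g commuting with a
   one-bump homeomorphism h (a continuous increasing bijection moving exactly
   the points of (lo,hi), all to the right) is continuous on (lo,hi): since
   g = h^-1 o g o h, continuity propagates from h t to t, and h pushes every
   break point of g into a piece where continuity is already known.

   For a itself this covers all of (0,r); 0 is interior to the first piece.
   For the conjugates, the orbit alpha k = alpha0 a^k tiles (0,r)
   ([orbit_tiling]); g is continuous inside each tile, maps each tile onto
   itself, and is therefore continuous at the common end points of adjacent
   tiles ([cont_at_common_end]). *)

From Stdlib Require Import Reals Lra Lia ZArith ClassicalEpsilon ProofIrrelevance Classical.
Open Scope R_scope.

Lemma affine_right_bound (lam c e m d : R) : 0 < lam -> 0 < d ->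
  (forall s, e < s < e + d -> m <= lam * s + c) -> m <= lam * e + c.
Proof.
  intros Hl Hd H. apply Rnot_lt_le; intro Hlt.
  set (w := Rmin d ((m - (lam * e + c)) / lam)).
  assert (Hw : 0 < w) by (apply Rmin_pos; [lra | apply Rdiv_lt_0_compat; lra]).
  assert (Hwd : w <= d) by apply Rmin_l.
  assert (Hlw : lam * w <= m - (lam * e + c)).
  { replace (m - (lam * e + c)) with (lam * ((m - (lam * e + c)) / lam)) by (field; lra).
    apply Rmult_le_compat_l; [lra | apply Rmin_r]. }
  specialize (H (e + w / 2) ltac:(lra)). nra.
Qed.

Lemma affine_left_bound (lam c e M d : R) : 0 < lam -> 0 < d ->
  (forall s, e - d < s < e -> lam * s + c <= M) -> lam * e + c <= M.
Proof.
  intros Hl Hd H.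
  enough (- M <= lam * - e + - c) by lra.
  apply (affine_right_bound lam (- c) (- e) (- M) d Hl Hd).
  intros s Hs. specialize (H (- s) ltac:(lra)). lra.
Qed.

Lemma affine_close (lam c s t eps : R) : 0 < lam -> Rabs (s - t) < eps / lam ->
  Rabs (lam * s + c - (lam * t + c)) < eps.
Proof.
  intros Hl H.
  replace (lam * s + c - (lam * t + c)) with (lam * (s - t)) by ring.
  rewrite Rabs_mult, (Rabs_pos_eq lam) by lra.
  replace eps with (lam * (eps / lam)) by (field; lra).
  apply Rmult_lt_compat_l; assumption.
Qed.

Lemma pt_eq {r} (x y : I r) : proj1_sig x = proj1_sig y -> x = y.
Proof. destruct x, y; simpl; intros ->; f_equal; apply proof_irrelevance. Qed.

Lemma pt_of {r} (x : R) : 0 <= x < r -> exists u : I r, proj1_sig u = x.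
Proof. intros H; exists (exist _ x H); reflexivity. Qed.

Definition cont_at {r : R} (f : I r -> I r) (t : I r) : Prop :=
  forall eps, 0 < eps -> exists delta, 0 < delta /\
    forall s : I r, Rabs (proj1_sig s - proj1_sig t) < delta ->
      Rabs (proj1_sig (f s) - proj1_sig (f t)) < eps.

Lemma cont_at_comp {r} (f g : I r -> I r) t :
  cont_at f t -> cont_at g (f t) -> cont_at (fun s => g (f s)) t.
Proof.
  intros Hf Hg eps He. destruct (Hg eps He) as [d1 [Hd1 H1]].
  destruct (Hf d1 Hd1) as [d2 [Hd2 H2]]. exists d2; split; auto.
Qed.

Lemma cont_at_ext {r} (f g : I r -> I r) t :
  (forall s, f s = g s) -> cont_at g t -> cont_at f t.
Proof.
  intros E Hg eps He. destruct (Hg eps He) as [d [Hd H]].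
  exists d; split; auto. intros s Hs. rewrite !E. auto.
Qed.

Lemma cont_at_id {r} (t : I r) : cont_at (fun s => s) t.
Proof. intros eps He; exists eps; split; auto. Qed.

Definition pa_data (r : R) (n : nat) (p lam c : nat -> R) (f : I r -> I r) : Prop :=
  p 0%nat = 0 /\ p n = r /\ (forall i, (i < n)%nat -> p i < p (S i)) /\
  (forall i, (i < n)%nat -> 0 < lam i) /\
  (forall i, (i < n)%nat -> forall t : I r, p i <= proj1_sig t < p (S i) ->
      proj1_sig (f t) = lam i * proj1_sig t + c i).

Lemma pa_data_of_PA r (Lam A : R -> Prop) f : (forall l, Lam l -> 0 < l) ->
  is_PA r Lam A f -> exists n p lam c, pa_data r n p lam c f.
Proof.
  intros HLp (n & p & lam & c & H0 & Hn & Hi & _ & HL & _ & Hf).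
  exists n, p, lam, c; repeat split; auto.
Qed.

Section PiecewiseAffine.
Context {r : R} {n : nat} {p lam c : nat -> R} {f : I r -> I r}.
Hypothesis Hf : pa_data r n p lam c f.

Lemma pa_value i (t : I r) : (i < n)%nat -> p i <= proj1_sig t < p (S i) ->
  proj1_sig (f t) = lam i * proj1_sig t + c i.
Proof. destruct Hf as (_ & _ & _ & _ & H). intros Hi Ht. exact (H i Hi t Ht). Qed.

Lemma pa_slope i : (i < n)%nat -> 0 < lam i.
Proof. destruct Hf as (_ & _ & _ & H & _). apply H. Qed.

Lemma breaks_le i j : (i <= j)%nat -> (j <= n)%nat -> p i <= p j.
Proof.
  destruct Hf as (_ & _ & Hi & _). intros Hij. induction Hij; intros Hj; [lra|].
  specialize (IHHij ltac:(lia)). specialize (Hi m ltac:(lia)). lra.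
Qed.

Lemma breaks_lt i j : (i < j)%nat -> (j <= n)%nat -> p i < p j.
Proof.
  intros Hij Hj. pose proof (breaks_le (S i) j Hij Hj).
  destruct Hf as (_ & _ & Hi & _). specialize (Hi i ltac:(lia)). lra.
Qed.

Lemma breaks_bounds i : (i <= n)%nat -> 0 <= p i <= r.
Proof.
  intros Hi. pose proof (breaks_le 0 i ltac:(lia) Hi) as Lo.
  pose proof (breaks_le i n Hi (le_n n)) as Hi'.
  destruct Hf as (Hp0 & Hpn & _). lra.
Qed.

Lemma piece_exists (t : I r) : exists i, (i < n)%nat /\ p i <= proj1_sig t < p (S i).
Proof.
  pose proof (proj2_sig t) as Bt. destruct Hf as (Hp0 & Hpn & _).
  enough (forall m, (m <= n)%nat -> proj1_sig t < p m ->
            exists i, (i < m)%nat /\ p i <= proj1_sig t < p (S i)) as K.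
  { destruct (K n (le_n n)) as [i [Hi1 Hi2]]; [simpl in *; lra|]. exists i; auto. }
  induction m; intros Hm Ht; [simpl in *; lra|].
  destruct (Rlt_le_dec (proj1_sig t) (p m)) as [Hlt|Hge].
  - destruct (IHm ltac:(lia) Hlt) as [i [Hi1 Hi2]]. exists i; split; [lia | auto].
  - exists m; split; [lia | lra].
Qed.

Lemma cont_of_piece_nbhd i (t : I r) d : (i < n)%nat -> 0 < d ->
  p i <= proj1_sig t < p (S i) ->
  (forall s : I r, Rabs (proj1_sig s - proj1_sig t) < d -> p i <= proj1_sig s < p (S i)) ->
  cont_at f t.
Proof.
  intros Hi Hd Ht Hs eps He. pose proof (pa_slope i Hi) as Hl.
  exists (Rmin d (eps / lam i)); split.
  { apply Rmin_pos; [lra | apply Rdiv_lt_0_compat; lra]. }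
  intros s Hst.
  rewrite (pa_value i s Hi (Hs s (Rlt_le_trans _ _ _ Hst (Rmin_l _ _)))), (pa_value i t Hi Ht).
  apply affine_close; [lra | exact (Rlt_le_trans _ _ _ Hst (Rmin_r _ _))].
Qed.

Lemma cont_inside_piece i (t : I r) : (i < n)%nat -> p i < proj1_sig t < p (S i) -> cont_at f t.
Proof.
  intros Hi Ht.
  apply (cont_of_piece_nbhd i t (Rmin (proj1_sig t - p i) (p (S i) - proj1_sig t))); [auto| |lra|].
  - apply Rmin_pos; lra.
  - intros s Hs. pose proof (Rmin_l (proj1_sig t - p i) (p (S i) - proj1_sig t)).
    pose proof (Rmin_r (proj1_sig t - p i) (p (S i) - proj1_sig t)).
    apply Rabs_def2 in Hs. lra.
Qed.

(* The left end 0 of [0,r) is an interior point of the first piece. *)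
Lemma cont_at_origin (t : I r) : proj1_sig t = 0 -> cont_at f t.
Proof.
  intros Ht. destruct (piece_exists t) as [i [Hi Hti]].
  apply (cont_of_piece_nbhd i t (p (S i) - proj1_sig t)); auto; [lra|].
  intros s Hs. pose proof (proj2_sig s). apply Rabs_def2 in Hs. simpl in *. lra.
Qed.

Lemma cont_at_break i (e : I r) : (S i < n)%nat -> proj1_sig e = p (S i) ->
  lam i * p (S i) + c i = proj1_sig (f e) -> cont_at f e.
Proof.
  intros Hi He Hv eps Heps.
  pose proof (breaks_lt i (S i) ltac:(lia) ltac:(lia)) as P1.
  pose proof (breaks_lt (S i) (S (S i)) ltac:(lia) ltac:(lia)) as P2.
  pose proof (pa_slope i ltac:(lia)) as L1. pose proof (pa_slope (S i) Hi) as L2.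
  set (m := Rmin (Rmin (p (S i) - p i) (p (S (S i)) - p (S i)))
                 (Rmin (eps / lam i) (eps / lam (S i)))).
  assert (Hm : 0 < m).
  { repeat apply Rmin_pos; try lra; apply Rdiv_lt_0_compat; lra. }
  exists m; split; [exact Hm|]. intros s Hs.
  pose proof (Rmin_l (Rmin (p (S i) - p i) (p (S (S i)) - p (S i)))
                     (Rmin (eps / lam i) (eps / lam (S i)))) as M1.
  pose proof (Rmin_r (Rmin (p (S i) - p i) (p (S (S i)) - p (S i)))
                     (Rmin (eps / lam i) (eps / lam (S i)))) as M2.
  pose proof (Rmin_l (p (S i) - p i) (p (S (S i)) - p (S i))).
  pose proof (Rmin_r (p (S i) - p i) (p (S (S i)) - p (S i))).
  pose proof (Rmin_l (eps / lam i) (eps / lam (S i))).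
  pose proof (Rmin_r (eps / lam i) (eps / lam (S i))).
  fold m in M1, M2. rewrite He in Hs. pose proof (Rabs_def2 _ _ Hs) as Hs'.
  destruct (Rlt_le_dec (proj1_sig s) (p (S i))).
  - rewrite (pa_value i s ltac:(lia) ltac:(lra)), <- Hv.
    apply affine_close; [lra | lra].
  - rewrite (pa_value (S i) s Hi ltac:(lra)), (pa_value (S i) e Hi ltac:(lra)), He.
    apply affine_close; [lra | lra].
Qed.

Lemma left_value_at_break i (e : I r) : (S i < n)%nat -> proj1_sig e = p (S i) ->
  cont_at f e -> lam i * p (S i) + c i = proj1_sig (f e).
Proof.
  intros Hi He Hc.
  pose proof (breaks_lt i (S i) ltac:(lia) ltac:(lia)) as P1.
  pose proof (breaks_bounds i ltac:(lia)) as P0.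
  pose proof (pa_slope i ltac:(lia)) as Hl. pose proof (proj2_sig e) as Be.
  assert (Near : forall eps, 0 < eps -> exists d, 0 < d /\ d <= p (S i) - p i /\
            forall s, p (S i) - d < s < p (S i) ->
              Rabs (lam i * s + c i - proj1_sig (f e)) < eps).
  { intros eps Heps. destruct (Hc eps Heps) as [d [Hd Hdd]].
    exists (Rmin d (p (S i) - p i)); split; [apply Rmin_pos; lra|split; [apply Rmin_r|]].
    intros s Hs. pose proof (Rmin_l d (p (S i) - p i)). pose proof (Rmin_r d (p (S i) - p i)).
    destruct (pt_of (r:=r) s ltac:(simpl in *; lra)) as [u Hu].
    rewrite <- Hu, <- (pa_value i u ltac:(lia) ltac:(lra)). apply Hdd.
    rewrite Hu, He. apply Rabs_def1; lra. }
  apply Rle_antisym; apply Rle_plus_epsilon; intros eps Heps;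
    destruct (Near eps Heps) as [d [Hd [Hdp Hdd]]].
  - apply (affine_left_bound (lam i) (c i) (p (S i)) _ d Hl Hd).
    intros s Hs. specialize (Hdd s Hs). apply Rabs_def2 in Hdd. lra.
  - specialize (Hdd (p (S i) - d / 2) ltac:(lra)). apply Rabs_def2 in Hdd. nra.
Qed.

Lemma piece_mono i (u v : I r) : (i < n)%nat ->
  p i <= proj1_sig u <= proj1_sig v -> proj1_sig v < p (S i) ->
  proj1_sig (f u) <= proj1_sig (f v).
Proof.
  intros Hi Huv Hv. pose proof (pa_slope i Hi).
  rewrite (pa_value i u Hi ltac:(lra)), (pa_value i v Hi ltac:(lra)). nra.
Qed.

Lemma piece_below_break k (u e : I r) : (S k < n)%nat ->
  p k <= proj1_sig u < p (S k) -> proj1_sig e = p (S k) -> cont_at f e ->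
  proj1_sig (f u) <= proj1_sig (f e).
Proof.
  intros Hk Hu He Hc. pose proof (pa_slope k ltac:(lia)).
  rewrite <- (left_value_at_break k e Hk He Hc), (pa_value k u ltac:(lia) Hu). nra.
Qed.

Lemma mono_across m : forall i (u v : I r), (i + m < n)%nat ->
  p i <= proj1_sig u < p (S i) -> p (i + m) <= proj1_sig v < p (S (i + m)) ->
  proj1_sig u <= proj1_sig v ->
  (forall w : I r, proj1_sig u < proj1_sig w <= proj1_sig v -> cont_at f w) ->
  proj1_sig (f u) <= proj1_sig (f v).
Proof.
  induction m as [|m IH]; intros i u v Hn Hu Hv Huv Hc.
  { rewrite Nat.add_0_r in *. apply (piece_mono i); [lia | lra | lra]. }
  rewrite Nat.add_succ_r in *.
  pose proof (breaks_le (S i) (S (i + m)) ltac:(lia) ltac:(lia)).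
  pose proof (breaks_lt (i + m) (S (i + m)) ltac:(lia) ltac:(lia)).
  pose proof (breaks_bounds (S (i + m)) ltac:(lia)).
  pose proof (Rmax_l (proj1_sig u) (p (i + m))). pose proof (Rmax_r (proj1_sig u) (p (i + m))).
  assert (Hzu : Rmax (proj1_sig u) (p (i + m)) < p (S (i + m))).
  { apply Rmax_lub_lt; lra. }
  pose proof (proj2_sig v).
  destruct (pt_of (r:=r) (Rmax (proj1_sig u) (p (i + m))) ltac:(pose proof (proj2_sig u); simpl in *; lra))
    as [z Hz].
  destruct (pt_of (r:=r) (p (S (i + m))) ltac:(simpl in *; lra)) as [w Hw].
  assert (Hfz : proj1_sig (f u) <= proj1_sig (f z)).
  { apply (IH i u z); [lia | auto | lra | lra |]. intros x Hx. apply Hc. lra. }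
  assert (Hzw : proj1_sig (f z) <= proj1_sig (f w)).
  { apply (piece_below_break (i + m) z w); [lia | lra | auto |]. apply Hc. lra. }
  assert (Hwv : proj1_sig (f w) <= proj1_sig (f v)).
  { apply (piece_mono (S (i + m)) w v); [lia | lra | lra]. }
  lra.
Qed.

Lemma nondecreasing_of_cont (s t : I r) : proj1_sig s <= proj1_sig t ->
  (forall u : I r, proj1_sig s < proj1_sig u <= proj1_sig t -> cont_at f u) ->
  proj1_sig (f s) <= proj1_sig (f t).
Proof.
  intros Hst Hc.
  destruct (piece_exists s) as [i [Hi Hsi]]. destruct (piece_exists t) as [j [Hj Htj]].
  destruct (Nat.le_gt_cases i j) as [Hij|Hji].
  - replace j with (i + (j - i))%nat in Htj by lia.
    apply (mono_across (j - i) i s t); auto; lia.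
  - pose proof (breaks_le (S j) i Hji ltac:(lia)). lra.
Qed.

(* If f maps (e,hi) onto itself and is continuous there, then f fixes e:
   right-continuity forces e <= f e, surjectivity and monotonicity f e <= e. *)
Lemma fixes_left_end (e : I r) (hi : R) : proj1_sig e < hi <= r ->
  (forall y, exists x, f x = y) ->
  (forall x, proj1_sig e < proj1_sig (f x) < hi <-> proj1_sig e < proj1_sig x < hi) ->
  (forall u : I r, proj1_sig e < proj1_sig u < hi -> cont_at f u) ->
  f e = e.
Proof.
  intros Hehi Hsurj Hinv Hc. pose proof (proj2_sig e) as Be.
  destruct (piece_exists e) as [k [Hk Hek]].
  apply pt_eq, Rle_antisym.
  - enough (proj1_sig (f e) <= 1 * proj1_sig e + 0) by lra.
    apply (affine_right_bound 1 0 _ _ (hi - proj1_sig e)); [lra | lra |].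
    intros y Hy. destruct (pt_of (r:=r) y ltac:(simpl in *; lra)) as [yy Hyy].
    destruct (Hsurj yy) as [x Hx].
    assert (Hxr : proj1_sig e < proj1_sig x < hi) by (apply Hinv; rewrite Hx, Hyy; lra).
    assert (M := nondecreasing_of_cont e x ltac:(lra) ltac:(intros u Hu; apply Hc; lra)).
    rewrite Hx, Hyy in M. lra.
  - rewrite (pa_value k e Hk Hek).
    apply (affine_right_bound _ _ _ _ (Rmin (p (S k) - proj1_sig e) (hi - proj1_sig e)));
      [apply (pa_slope k Hk) | apply Rmin_pos; lra |].
    intros s Hs. pose proof (Rmin_l (p (S k) - proj1_sig e) (hi - proj1_sig e)).
    pose proof (Rmin_r (p (S k) - proj1_sig e) (hi - proj1_sig e)).
    destruct (pt_of (r:=r) s ltac:(simpl in *; lra)) as [u Hu].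
    assert (Hfu := proj2 (Hinv u) ltac:(lra)).
    rewrite (pa_value k u Hk ltac:(lra)), Hu in Hfu. lra.
Qed.

Lemma left_limit_at_right_end j (e : I r) (lo : R) : (j < n)%nat ->
  proj1_sig e = p (S j) -> 0 <= lo < proj1_sig e ->
  (forall y, exists x, f x = y) ->
  (forall x, lo < proj1_sig (f x) < proj1_sig e <-> lo < proj1_sig x < proj1_sig e) ->
  (forall u : I r, lo < proj1_sig u < proj1_sig e -> cont_at f u) ->
  lam j * proj1_sig e + c j = proj1_sig e.
Proof.
  intros Hj He Hlo Hsurj Hinv Hc. pose proof (proj2_sig e) as Be.
  pose proof (breaks_lt j (S j) ltac:(lia) ltac:(lia)).
  pose proof (breaks_bounds j ltac:(lia)). pose proof (pa_slope j Hj).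
  apply Rle_antisym.
  - apply (affine_left_bound _ _ _ _ (Rmin (proj1_sig e - p j) (proj1_sig e - lo)));
      [lra | apply Rmin_pos; lra |].
    intros s Hs. pose proof (Rmin_l (proj1_sig e - p j) (proj1_sig e - lo)).
    pose proof (Rmin_r (proj1_sig e - p j) (proj1_sig e - lo)).
    destruct (pt_of (r:=r) s ltac:(simpl in *; lra)) as [u Hu].
    assert (Hfu := proj2 (Hinv u) ltac:(lra)).
    rewrite (pa_value j u Hj ltac:(lra)), Hu in Hfu. lra.
  - enough (1 * proj1_sig e + 0 <= lam j * proj1_sig e + c j) by lra.
    apply (affine_left_bound 1 0 _ _ (proj1_sig e - lo)); [lra | lra |].
    intros y Hy. destruct (pt_of (r:=r) y ltac:(simpl in *; lra)) as [yy Hyy].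
    destruct (Hsurj yy) as [x Hx].
    assert (Hxr : lo < proj1_sig x < proj1_sig e) by (apply Hinv; rewrite Hx, Hyy; lra).
    pose proof (Rmax_l (proj1_sig x) (p j)). pose proof (Rmax_r (proj1_sig x) (p j)).
    assert (Hm : Rmax (proj1_sig x) (p j) < proj1_sig e) by (apply Rmax_lub_lt; lra).
    set (s := (Rmax (proj1_sig x) (p j) + proj1_sig e) / 2).
    destruct (pt_of (r:=r) s ltac:(unfold s; simpl in *; lra)) as [u Hu].
    assert (M := nondecreasing_of_cont x u ltac:(unfold s in Hu; lra)
                   ltac:(intros w Hw; apply Hc; unfold s in Hu; lra)).
    rewrite Hx, Hyy, (pa_value j u Hj ltac:(unfold s in Hu; lra)), Hu in M.
    assert (lam j * s <= lam j * proj1_sig e) by (apply Rmult_le_compat_l; unfold s; lra).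
    lra.
Qed.

Lemma cont_at_common_end (e : I r) (lo hi : R) :
  0 <= lo < proj1_sig e -> proj1_sig e < hi <= r ->
  (forall y, exists x, f x = y) ->
  (forall x, lo < proj1_sig (f x) < proj1_sig e <-> lo < proj1_sig x < proj1_sig e) ->
  (forall x, proj1_sig e < proj1_sig (f x) < hi <-> proj1_sig e < proj1_sig x < hi) ->
  (forall u : I r, lo < proj1_sig u < proj1_sig e -> cont_at f u) ->
  (forall u : I r, proj1_sig e < proj1_sig u < hi -> cont_at f u) ->
  cont_at f e.
Proof.
  intros Hlo Hhi Hsurj Hinv1 Hinv2 Hc1 Hc2.
  destruct (piece_exists e) as [i [Hi Hei]].
  destruct (Rlt_le_dec (p i) (proj1_sig e)) as [Hlt|Hge].
  { apply (cont_inside_piece i e Hi); lra. }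
  destruct i as [|j].
  { destruct Hf as (Hp0 & _). lra. }
  assert (He : proj1_sig e = p (S j)) by lra.
  apply (cont_at_break j e Hi He).
  rewrite <- He, (fixes_left_end e hi Hhi Hsurj Hinv2 Hc2).
  exact (left_limit_at_right_end j e lo ltac:(lia) He Hlo Hsurj Hinv1 Hc1).
Qed.
End PiecewiseAffine.

Lemma cont_of_mono_surj {r} (f : I r -> I r) :
  (forall s t : I r, proj1_sig s <= proj1_sig t -> proj1_sig (f s) <= proj1_sig (f t)) ->
  (forall y, exists x, f x = y) -> forall t, cont_at f t.
Proof.
  intros Hm Hs t eps He. set (v := proj1_sig (f t)).
  pose proof (proj2_sig (f t)) as Bv. fold v in Bv.
  assert (Lo : exists d, 0 < d /\ forall s : I r,
             proj1_sig t - d < proj1_sig s -> v - eps / 2 <= proj1_sig (f s)).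
  { destruct (Rle_lt_dec 0 (v - eps / 2)).
    - destruct (pt_of (r:=r) (v - eps / 2) ltac:(lra)) as [y Hy].
      destruct (Hs y) as [x Hx].
      assert (proj1_sig x < proj1_sig t).
      { apply Rnot_le_lt; intro Hle. specialize (Hm t x Hle). rewrite Hx, Hy in Hm. fold v in Hm. lra. }
      exists (proj1_sig t - proj1_sig x); split; [lra|].
      intros s Hs'. rewrite <- Hy, <- Hx. apply Hm. lra.
    - exists 1; split; [lra|]. intros s _. pose proof (proj2_sig (f s)). simpl in *. lra. }
  assert (Up : exists d, 0 < d /\ forall s : I r,
             proj1_sig s < proj1_sig t + d -> proj1_sig (f s) <= v + eps / 2).
  { destruct (Rlt_le_dec (v + eps / 2) r).
    - destruct (pt_of (r:=r) (v + eps / 2) ltac:(lra)) as [y Hy].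
      destruct (Hs y) as [x Hx].
      assert (proj1_sig t < proj1_sig x).
      { apply Rnot_le_lt; intro Hle. specialize (Hm x t Hle). rewrite Hx, Hy in Hm. fold v in Hm. lra. }
      exists (proj1_sig x - proj1_sig t); split; [lra|].
      intros s Hs'. rewrite <- Hy, <- Hx. apply Hm. lra.
    - exists 1; split; [lra|]. intros s _. pose proof (proj2_sig (f s)). simpl in *. lra. }
  destruct Lo as [d1 [Hd1 L]], Up as [d2 [Hd2 U]].
  exists (Rmin d1 d2); split; [apply Rmin_pos; auto|].
  intros s Hst. pose proof (Rabs_def2 _ _ (Rlt_le_trans _ _ _ Hst (Rmin_l _ _))).
  pose proof (Rabs_def2 _ _ (Rlt_le_trans _ _ _ Hst (Rmin_r _ _))).
  specialize (L s ltac:(lra)). specialize (U s ltac:(lra)). apply Rabs_def1; lra.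
Qed.

Definition cont_mono {r : R} (f : I r -> I r) : Prop :=
  (forall t, cont_at f t) /\
  (forall s t : I r, proj1_sig s <= proj1_sig t -> proj1_sig (f s) <= proj1_sig (f t)).

Lemma cont_mono_ext {r} (f g : I r -> I r) : (forall t, f t = g t) -> cont_mono g -> cont_mono f.
Proof.
  intros E [Cg Mg]; split.
  - intros t. exact (cont_at_ext f g t E (Cg t)).
  - intros s t H. rewrite !E. auto.
Qed.

Lemma cont_mono_comp {r} (f g : I r -> I r) :
  cont_mono f -> cont_mono g -> cont_mono (fun t => g (f t)).
Proof.
  intros [Cf Mf] [Cg Mg]; split.
  - intros t. apply cont_at_comp; auto.
  - intros s t H. auto.
Qed.

Lemma cont_mono_iter {r} (f : I r -> I r) : cont_mono f -> forall k, cont_mono (Nat.iter k f).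
Proof.
  intros Hf k. induction k as [|k IH].
  - split; [intros t; apply cont_at_id | intros s t H; exact H].
  - exact (cont_mono_comp (Nat.iter k f) f IH Hf).
Qed.

Lemma cont_mono_strict {r} (f g : I r -> I r) : cont_mono f -> (forall x, g (f x) = x) ->
  forall s t : I r, proj1_sig s < proj1_sig t -> proj1_sig (f s) < proj1_sig (f t).
Proof.
  intros [_ Mf] Hg s t H. pose proof (Mf s t ltac:(lra)).
  destruct (Req_dec (proj1_sig (f s)) (proj1_sig (f t))) as [E|E]; [|lra].
  apply pt_eq, (f_equal g) in E. rewrite !Hg in E. subst; lra.
Qed.

Lemma cont_mono_reflect {r} (f : I r -> I r) : cont_mono f ->
  forall s t : I r, proj1_sig (f s) < proj1_sig (f t) -> proj1_sig s < proj1_sig t.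
Proof.
  intros [_ Mf] s t H. apply Rnot_le_lt; intro Hle. specialize (Mf t s Hle). lra.
Qed.

Lemma finv_spec {r} (f : I r -> I r) : is_bij f ->
  (forall x, f (finv f x) = x) /\ (forall x, finv f (f x) = x).
Proof.
  intros [y [Hy1 Hy2]].
  assert (A : forall x, f (finv f x) = x).
  { intros x. apply (epsilon_spec (inhabits x) (fun z => f z = x)). exists (y x); auto. }
  split; auto. intros x. rewrite <- (Hy1 (finv f (f x))), A. auto.
Qed.

Lemma cont_mono_finv {r} (f : I r -> I r) : is_bij f -> cont_mono f -> cont_mono (finv f).
Proof.
  intros Hb Hf. destruct (finv_spec f Hb) as [A B].
  assert (M : forall s t : I r, proj1_sig s <= proj1_sig t ->
                proj1_sig (finv f s) <= proj1_sig (finv f t)).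
  { intros s t H. apply Rnot_lt_le; intro Hlt.
    pose proof (cont_mono_strict f (finv f) Hf B _ _ Hlt). rewrite !A in H0. lra. }
  split; auto. apply cont_of_mono_surj; auto. intros y. exists (f y); auto.
Qed.

Lemma cont_mono_of_F r (Lam A : R -> Prop) (f : I r -> I r) :
  (forall l, Lam l -> 0 < l) -> inF r Lam A f -> cont_mono f.
Proof.
  intros HL [[_ HPA] Hc]. split; [exact Hc|].
  destruct (pa_data_of_PA r Lam A f HL HPA) as (n & p & lam & c & Hpa).
  intros s t Hst. exact (nondecreasing_of_cont Hpa s t Hst (fun u _ => Hc u)).
Qed.

Lemma iter_cancel {T} (F G : T -> T) : (forall x, G (F x) = x) ->
  forall k x, Nat.iter k G (Nat.iter k F x) = x.
Proof.
  intros H k. induction k as [|k IH]; intros x; [reflexivity|].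
  rewrite (Nat.iter_succ_r k _ F x), Nat.iter_succ, IH. auto.
Qed.

Lemma zpow_of_nat {T} (f : T -> T) k x : zpow f (Z.of_nat k) x = Nat.iter k f x.
Proof. destruct k; [reflexivity|]. simpl. rewrite SuccNat2Pos.id_succ. reflexivity. Qed.

Lemma zpow_opp_of_nat {T} (f : T -> T) k x : zpow f (- Z.of_nat k) x = Nat.iter k (finv f) x.
Proof. destruct k; [reflexivity|]. simpl. rewrite SuccNat2Pos.id_succ. reflexivity. Qed.

Lemma Z_cases (k : Z) : (exists m, k = Z.of_nat m) \/ (exists m, k = (- Z.of_nat (S m))%Z).
Proof.
  destruct (Z_le_gt_dec 0 k).
  - left. exists (Z.to_nat k). rewrite Z2Nat.id; lia.
  - right. exists (Z.to_nat (- k - 1)). rewrite Nat2Z.inj_succ, Z2Nat.id; lia.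
Qed.

Lemma zpow_cont_mono {r} (a : I r -> I r) : is_bij a -> cont_mono a ->
  forall k, cont_mono (zpow a k).
Proof.
  intros Hb Ha k. destruct (Z_cases k) as [[m ->]|[m ->]].
  - apply (cont_mono_ext _ (Nat.iter m a)); [intros x; apply zpow_of_nat|].
    apply cont_mono_iter, Ha.
  - apply (cont_mono_ext _ (Nat.iter (S m) (finv a))); [intros x; apply zpow_opp_of_nat|].
    apply cont_mono_iter, cont_mono_finv; auto.
Qed.

Lemma zpow_cancel {r} (a : I r -> I r) : is_bij a -> forall k x,
  zpow a (- k) (zpow a k x) = x /\ zpow a k (zpow a (- k) x) = x.
Proof.
  intros Hb k x. destruct (finv_spec a Hb) as [A B].
  destruct (Z_cases k) as [[m ->]|[m ->]].
  - rewrite !zpow_opp_of_nat, !zpow_of_nat. split; apply iter_cancel; auto.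
  - rewrite Z.opp_involutive, !zpow_of_nat, !zpow_opp_of_nat. split; apply iter_cancel; auto.
Qed.

Lemma zpow_succ {r} (a : I r -> I r) : is_bij a -> forall k x,
  zpow a (k + 1) x = zpow a k (a x).
Proof.
  intros Hb k x. destruct (finv_spec a Hb) as [A B].
  destruct (Z_cases k) as [[m ->]|[m ->]].
  - replace (Z.of_nat m + 1)%Z with (Z.of_nat (S m)) by lia.
    rewrite !zpow_of_nat. apply Nat.iter_succ_r.
  - replace (- Z.of_nat (S m) + 1)%Z with (- Z.of_nat m)%Z by lia.
    rewrite !zpow_opp_of_nat, Nat.iter_succ_r, B. reflexivity.
Qed.

Definition one_bump {r : R} (h : I r -> I r) (lo hi : R) : Prop :=
  is_bij h /\ cont_mono h /\ (forall t, proj1_sig t <= proj1_sig (h t)) /\ supp_eq h lo hi.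

Lemma one_bump_of_Fup r (Lam A : R -> Prop) (h : I r -> I r) lo hi :
  (forall l, Lam l -> 0 < l) -> inFup r Lam A h -> supp_eq h lo hi -> one_bump h lo hi.
Proof.
  intros HL [HF Hup] Hs.
  exact (conj (proj1 (proj1 HF)) (conj (cont_mono_of_F r Lam A h HL HF) (conj Hup Hs))).
Qed.

(* A one-bump map pushes every point of its support to the right, inside the
   support: the right end hi, if a point, is fixed and h is increasing. *)
Lemma one_bump_pushes {r} (h : I r -> I r) lo hi : one_bump h lo hi ->
  forall t : I r, lo < proj1_sig t < hi -> proj1_sig t < proj1_sig (h t) < hi.
Proof.
  intros (Hb & Hm & Hup & Hs) t Ht. destruct (finv_spec h Hb) as [_ B].
  split.
  - pose proof (Hup t). destruct (Req_dec (proj1_sig t) (proj1_sig (h t))) as [E|E]; [|lra].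
    exfalso. apply (proj2 (Hs t) Ht). symmetry. apply pt_eq, E.
  - apply Rnot_le_lt; intro Hle. pose proof (proj2_sig (h t)).
    destruct (pt_of (r:=r) hi ltac:(pose proof (proj2_sig t); simpl in *; lra)) as [z Hz].
    assert (Fz : h z = z) by (apply NNPP; intro Hn; apply Hs in Hn; lra).
    pose proof (cont_mono_strict h (finv h) Hm B t z ltac:(lra)). rewrite Fz in H0. lra.
Qed.

Lemma one_bump_conj {r} (b P Q : I r -> I r) (x0 x1 : I r) :
  one_bump b (proj1_sig x0) (proj1_sig x1) ->
  cont_mono P -> cont_mono Q -> (forall x, Q (P x) = x) -> (forall x, P (Q x) = x) ->
  one_bump (fun t => P (b (Q t))) (proj1_sig (P x0)) (proj1_sig (P x1)).
Proof.
  intros (Hb & Hm & Hup & Hs) HP HQ QP PQ. destruct (finv_spec b Hb) as [A B].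
  split; [|split; [split|split]].
  - exists (fun t => P (finv b (Q t))). split; intros t.
    + rewrite QP, B, PQ. reflexivity.
    + rewrite QP, A, PQ. reflexivity.
  - intros t. apply cont_at_comp; [apply cont_at_comp|]; [apply HQ | apply Hm | apply HP].
  - intros s t H. apply HP, Hm, HQ, H.
  - intros t. rewrite <- (PQ t) at 1. apply HP, Hup.
  - intros t; split.
    + intros Hne.
      assert (b (Q t) <> Q t) as Hbq by (intro E; apply Hne; rewrite E, PQ; reflexivity).
      apply Hs in Hbq. rewrite <- (PQ t).
      split; apply (cont_mono_strict P Q HP QP); lra.
    + intros Ht E. rewrite <- (PQ t) in Ht.
      assert (Hq : proj1_sig x0 < proj1_sig (Q t) < proj1_sig x1)
        by (split; apply (cont_mono_reflect P HP); lra).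
      apply (proj2 (Hs (Q t)) Hq). rewrite <- (QP (b (Q t))), E. reflexivity.
Qed.

Lemma commute_at {r} (g h : I r -> I r) : commute g h -> forall s, h (g s) = g (h s).
Proof. intros Hc s. exact (f_equal (fun F => F s) Hc). Qed.

Lemma commuting_preserves_support {r} (g h : I r -> I r) lo hi :
  (forall x y, g x = g y -> x = y) -> supp_eq h lo hi -> (forall s, h (g s) = g (h s)) ->
  forall x, lo < proj1_sig (g x) < hi <-> lo < proj1_sig x < hi.
Proof.
  intros Hinj Hs Hc x. rewrite <- (Hs (g x)), <- (Hs x), Hc.
  split; intros Hn E; apply Hn; [rewrite E | apply Hinj]; auto.
Qed.

(* If g commutes with h, then g = (finv h) o g o h, so continuity of g at h t
   gives continuity at t. *)
Lemma cont_at_transport {r} (g h hinv : I r -> I r) (t : I r) :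
  (forall s, h (g s) = g (h s)) -> (forall s, hinv (h s) = s) ->
  cont_at h t -> (forall s, cont_at hinv s) -> cont_at g (h t) -> cont_at g t.
Proof.
  intros Hc Hinv Hh Hhinv Hg. apply (cont_at_ext g (fun s => hinv (g (h s)))).
  { intros s. rewrite <- Hc, Hinv. reflexivity. }
  apply (cont_at_comp (fun s => g (h s)) hinv); [apply cont_at_comp|]; auto.
Qed.

(* Going down through the pieces, a break point t
   is pushed by h into a region where continuity is already known. *)
Lemma cont_on_bump_support {r n p lam c} (g h : I r -> I r) lo hi :
  pa_data r n p lam c g -> one_bump h lo hi -> (forall s, h (g s) = g (h s)) ->
  forall t : I r, lo < proj1_sig t < hi -> cont_at g t.
Proof.
  intros Hpa Hbump Hc. pose proof Hbump as (Hb & Hm & _).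
  destruct (finv_spec h Hb) as [_ B].
  pose proof (proj1 (cont_mono_finv h Hb Hm)) as Hhinv.
  assert (Desc : forall d j, (j + d = n)%nat -> forall t : I r,
            p j <= proj1_sig t -> lo < proj1_sig t < hi -> cont_at g t).
  { induction d as [|d IH]; intros j Hj t Ht Hlh.
    - replace j with n in Ht by lia. pose proof (proj2_sig t).
      destruct Hpa as (_ & Hpn & _). simpl in *. lra.
    - destruct (Rle_lt_dec (p (S j)) (proj1_sig t)).
      { apply (IH (S j)); auto; lia. }
      destruct (Rlt_le_dec (p j) (proj1_sig t)).
      { apply (cont_inside_piece Hpa j t ltac:(lia)); lra. }
      apply (cont_at_transport g h (finv h) t Hc B (proj1 Hm t) Hhinv).
      destruct (one_bump_pushes h lo hi Hbump t Hlh).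
      destruct (Rle_lt_dec (p (S j)) (proj1_sig (h t))).
      + apply (IH (S j)); [lia | lra | lra].
      + apply (cont_inside_piece Hpa j (h t) ltac:(lia)); lra. }
  intros t Ht. apply (Desc n 0%nat); auto.
  destruct Hpa as (Hp0 & _). rewrite Hp0. apply (proj2_sig t).
Qed.

Lemma orbit_limit_fixed {r} (f : I r -> I r) (x l : I r) : cont_at f l ->
  Un_cv (fun k => proj1_sig (Nat.iter k f x)) (proj1_sig l) -> f l = l.
Proof.
  intros Hc Hcv. apply pt_eq.
  apply (UL_sequence (fun k => proj1_sig (Nat.iter (S k) f x))).
  - intros eps He. destruct (Hc eps He) as [d [Hd Hdd]]. destruct (Hcv d Hd) as [N HN].
    exists N. intros k Hk. apply Hdd, HN, Hk.
  - intros eps He. destruct (Hcv eps He) as [N HN]. exists N. intros k Hk. apply HN. lia.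
Qed.

(* For a continuous map without fixed points in (0,r) moving points right
   (resp. left), every orbit starting in (0,r) eventually passes above (resp.
   below) any given point of (0,r): otherwise it would converge to a fixed point. *)
Lemma orbit_passes_up {r} (f : I r -> I r) (x t : I r) : (forall s, cont_at f s) ->
  (forall s, proj1_sig s <= proj1_sig (f s)) -> (forall s, 0 < proj1_sig s -> f s <> s) ->
  0 < proj1_sig x -> exists N, proj1_sig t < proj1_sig (Nat.iter N f x).
Proof.
  intros Hc Hup Hfix Hx. apply NNPP; intro Hn.
  assert (Hle : forall N, proj1_sig (Nat.iter N f x) <= proj1_sig t)
    by (intros N; apply Rnot_lt_le; intro; apply Hn; exists N; auto).
  set (u := fun k => proj1_sig (Nat.iter k f x)).
  assert (Gu : Un_growing u) by (intros k; apply Hup).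
  destruct (growing_cv u Gu) as [l Hl]; [exists (proj1_sig t); intros y [k ->]; apply Hle|].
  pose proof (growing_ineq u l Gu Hl 0%nat) as L0.
  assert (Lt : l <= proj1_sig t).
  { apply Rnot_lt_le; intro Hlt. destruct (Hl (l - proj1_sig t) ltac:(lra)) as [N HN].
    specialize (HN N (le_n N)). specialize (Hle N). apply Rabs_def2 in HN. unfold u in HN. lra. }
  pose proof (proj2_sig t).
  destruct (pt_of (r:=r) l ltac:(unfold u in L0; simpl in *; lra)) as [lI HlI].
  rewrite <- HlI in Hl. apply (Hfix lI); [unfold u in L0; simpl in *; lra|].
  exact (orbit_limit_fixed f x lI (Hc lI) Hl).
Qed.

Lemma orbit_passes_down {r} (f : I r -> I r) (x t : I r) : (forall s, cont_at f s) ->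
  (forall s, proj1_sig (f s) <= proj1_sig s) -> (forall s, 0 < proj1_sig s -> f s <> s) ->
  0 < proj1_sig t -> exists N, proj1_sig (Nat.iter N f x) <= proj1_sig t.
Proof.
  intros Hc Hdown Hfix Ht. apply NNPP; intro Hn.
  assert (Hgt : forall N, proj1_sig t < proj1_sig (Nat.iter N f x))
    by (intros N; apply Rnot_le_lt; intro; apply Hn; exists N; auto).
  set (u := fun k => proj1_sig (Nat.iter k f x)).
  assert (Du : Un_decreasing u) by (intros k; apply Hdown).
  destruct (decreasing_cv u Du) as [l Hl].
  { exists (- proj1_sig t). intros y [k ->]. unfold opp_seq. specialize (Hgt k). unfold u. lra. }
  pose proof (decreasing_ineq u l Du Hl 0%nat) as L0.
  assert (Lt : proj1_sig t <= l).
  { apply Rnot_lt_le; intro Hlt. destruct (Hl (proj1_sig t - l) ltac:(lra)) as [N HN].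
    specialize (HN N (le_n N)). specialize (Hgt N). apply Rabs_def2 in HN. unfold u in HN. lra. }
  pose proof (proj2_sig x).
  destruct (pt_of (r:=r) l ltac:(unfold u in L0; simpl in *; lra)) as [lI HlI].
  rewrite <- HlI in Hl. apply (Hfix lI); [lra|].
  exact (orbit_limit_fixed f x lI (Hc lI) Hl).
Qed.

Lemma orbit_tiling {r} (a : I r -> I r) (x0 : I r) : one_bump a 0 r -> 0 < proj1_sig x0 ->
  forall t : I r, 0 < proj1_sig t -> exists k : Z,
    proj1_sig (zpow a k x0) <= proj1_sig t < proj1_sig (zpow a (k + 1) x0).
Proof.
  intros (Hb & Hm & Hup & Hs) Hx0 t Ht. destruct (finv_spec a Hb) as [A B].
  assert (Fix : forall s : I r, 0 < proj1_sig s -> a s <> s)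
    by (intros s Hs0; apply Hs; pose proof (proj2_sig s); simpl in *; lra).
  destruct (orbit_passes_up a x0 t (proj1 Hm) Hup Fix Hx0) as [N HN].
  destruct (orbit_passes_down (finv a) x0 t (proj1 (cont_mono_finv a Hb Hm))) as [M HM].
  { intros s. pose proof (Hup (finv a s)). rewrite A in H. exact H. }
  { intros s Hs0 E. apply (Fix s Hs0). rewrite <- E at 1. apply A. }
  { exact Ht. }
  set (al := fun k => proj1_sig (zpow a k x0)).
  assert (Search : forall m : nat, al (- Z.of_nat M)%Z <= proj1_sig t ->
            proj1_sig t < al (- Z.of_nat M + Z.of_nat m)%Z ->
            exists k, al k <= proj1_sig t < al (k + 1)%Z).
  { induction m as [|m IH]; intros H1 H2.
    - rewrite Z.add_0_r in H2. lra.
    - destruct (Rlt_le_dec (proj1_sig t) (al (- Z.of_nat M + Z.of_nat m)%Z)).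
      + apply IH; auto.
      + exists (- Z.of_nat M + Z.of_nat m)%Z. split; auto.
        replace (- Z.of_nat M + Z.of_nat m + 1)%Z with (- Z.of_nat M + Z.of_nat (S m))%Z by lia.
        exact H2. }
  apply (Search (M + N)%nat).
  - unfold al. rewrite zpow_opp_of_nat. exact HM.
  - unfold al. replace (- Z.of_nat M + Z.of_nat (M + N))%Z with (Z.of_nat N) by lia.
    rewrite zpow_of_nat. exact HN.
Qed.

Lemma cont_of_commuting_full_bump {r n p lam c} (g a : I r -> I r) :
  pa_data r n p lam c g -> one_bump a 0 r -> (forall s, a (g s) = g (a s)) ->
  forall t, cont_at g t.
Proof.
  intros Hpa Ha Hc t. destruct (Req_dec (proj1_sig t) 0) as [E|E].
  - exact (cont_at_origin Hpa t E).
  - apply (cont_on_bump_support g a 0 r Hpa Ha Hc). pose proof (proj2_sig t). simpl in *. lra.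
Qed.

Lemma cont_of_commuting_bumps {r n p lam c} (g : I r -> I r)
  (alpha : Z -> I r) (h : Z -> I r -> I r) :
  pa_data r n p lam c g -> is_bij g ->
  (forall k, one_bump (h k) (proj1_sig (alpha k)) (proj1_sig (alpha (k + 1)%Z))) ->
  (forall k, proj1_sig (alpha k) < proj1_sig (alpha (k + 1)%Z)) ->
  (forall t : I r, 0 < proj1_sig t -> exists k,
     proj1_sig (alpha k) <= proj1_sig t < proj1_sig (alpha (k + 1)%Z)) ->
  (forall k s, h k (g s) = g (h k s)) ->
  forall t, cont_at g t.
Proof.
  intros Hpa [gi [Hgi1 Hgi2]] Hbump Hincr Htile Hc.
  assert (Ginj : forall x y, g x = g y -> x = y).
  { intros x y E. rewrite <- (Hgi1 x), <- (Hgi1 y), E. reflexivity. }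
  assert (Gsurj : forall y, exists x, g x = y) by (intros y; exists (gi y); auto).
  assert (Inside : forall k (u : I r), proj1_sig (alpha k) < proj1_sig u < proj1_sig (alpha (k + 1)%Z) ->
                     cont_at g u)
    by (intros k; exact (cont_on_bump_support g (h k) _ _ Hpa (Hbump k) (Hc k))).
  assert (Tile : forall k x, proj1_sig (alpha k) < proj1_sig (g x) < proj1_sig (alpha (k + 1)%Z) <->
                   proj1_sig (alpha k) < proj1_sig x < proj1_sig (alpha (k + 1)%Z))
    by (intros k; exact (commuting_preserves_support g (h k) _ _ Ginj (proj2 (proj2 (proj2 (Hbump k)))) (Hc k))).
  intros t. destruct (Req_dec (proj1_sig t) 0) as [E|E].
  { exact (cont_at_origin Hpa t E). }
  pose proof (proj2_sig t).
  destruct (Htile t ltac:(simpl in *; lra)) as [k [Hk1 Hk2]].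
  destruct (Rle_lt_or_eq_dec _ _ Hk1) as [Hlt|Heq].
  { apply (Inside k). lra. }
  apply pt_eq in Heq. subst t.
  assert (Prev : (k - 1 + 1 = k)%Z) by lia.
  pose proof (Hincr (k - 1)%Z) as Hk0. pose proof (Tile (k - 1)%Z) as Tile0.
  pose proof (Inside (k - 1)%Z) as Inside0. rewrite Prev in Hk0, Tile0, Inside0.
  pose proof (proj2_sig (alpha (k - 1)%Z)) as B0. pose proof (proj2_sig (alpha (k + 1)%Z)) as B1.
  simpl in B0, B1.
  apply (cont_at_common_end Hpa (alpha k) (proj1_sig (alpha (k - 1)%Z)) (proj1_sig (alpha (k + 1)%Z)));
    [lra | lra | exact Gsurj | exact Tile0 | exact (Tile k) | exact Inside0 | exact (Inside k)].
Qed.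

Theorem lemma4p7 (r : R) (hr : 0 < r) (Lam A : R -> Prop)
  (hLam : good_Lam Lam) (hA : good_A r Lam A)
  (a b : I r -> I r) (alpha0 : I r)
  (ha : inFup r Lam A a) (hsa : supp_eq a 0 r)
  (hal0 : 0 < proj1_sig alpha0) (hal0A : A (proj1_sig alpha0))
  (hb : inFup r Lam A b)
  (hsb : supp_eq b (proj1_sig alpha0) (proj1_sig (zpow a 1%Z alpha0)))
  (G : (I r -> I r) -> Prop) (hG : subgroupV r G)
  (hGF : forall x, (G x /\ inF r Rpos Rall x) <-> inF r Lam A x) :
  (forall g, (G g /\ commute g a) <-> (inF r Lam A g /\ commute g a)) /\
  (forall g,
     (G g /\ forall k : Z, commute g (rmul (rmul (zpow a (- k)) b) (zpow a k))) <->
     (inF r Lam A g /\ forall k : Z, commute g (rmul (rmul (zpow a (- k)) b) (zpow a k)))).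
Proof.
  destruct hLam as [Lam_pos _].
  pose proof (one_bump_of_Fup r Lam A a 0 r Lam_pos ha hsa) as a_bump.
  pose proof (one_bump_of_Fup r Lam A b _ _ Lam_pos hb hsb) as b_bump.
  pose proof a_bump as (a_bij & a_mono & _).
  set (alpha := fun k => zpow a k alpha0).
  assert (conj_bump : forall k, one_bump (rmul (rmul (zpow a (- k)) b) (zpow a k))
                          (proj1_sig (alpha k)) (proj1_sig (alpha (k + 1)%Z))).
  { intros k. unfold alpha. rewrite (zpow_succ a a_bij).
    apply (one_bump_conj b (zpow a k) (zpow a (- k)) alpha0 (a alpha0)); auto;
      try apply zpow_cont_mono; auto; intros x; apply zpow_cancel; auto. }
  assert (alpha_incr : forall k, proj1_sig (alpha k) < proj1_sig (alpha (k + 1)%Z)).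
  { intros k. unfold alpha. rewrite (zpow_succ a a_bij).
    apply (cont_mono_strict _ (zpow a (- k)) (zpow_cont_mono a a_bij a_mono k));
      [intros x; apply zpow_cancel; auto|].
    apply (one_bump_pushes a 0 r a_bump). pose proof (proj2_sig alpha0). simpl in *. lra. }
  assert (G_pa : forall g, G g -> is_bij g /\ exists n p lam c, pa_data r n p lam c g).
  { intros g Hg. destruct (proj1 hG g Hg) as [Hbij HPA].
    split; [exact Hbij | exact (pa_data_of_PA r Rpos Rall g (fun l H => H) HPA)]. }
  assert (G_F : forall g, G g -> (forall t, cont_at g t) -> inF r Lam A g).
  { intros g Hg Hc. apply hGF. split; [exact Hg|]. split; [exact (proj1 hG g Hg) | exact Hc]. }
  split; intros g; split; intros [Hg Hc]; split; try exact Hc;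
    try exact (proj1 (proj2 (hGF g) Hg)); apply G_F; auto;
    destruct (G_pa g Hg) as [g_bij (n & p & lam & c & g_pa)].
  - exact (cont_of_commuting_full_bump g a g_pa a_bump (commute_at g a Hc)).
  - apply (cont_of_commuting_bumps g alpha _ g_pa g_bij conj_bump alpha_incr).
    + exact (orbit_tiling a alpha0 a_bump hal0).
    + intros k. exact (commute_at _ _ (Hc k)).
Qed.
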